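(* Let $M\in\mathcal{F}$. Then there exist positive integers $n_1,\dots,n_k$ such that $M$ is the range of the cardinal function of the finite sequence $(n_1,\dots,n_k)$.
   Context: For a finite sequence $\mathbf{x}=(x_1,\dots,x_N)$ of positive reals, its achievement set is $\mathcal{A}(\mathbf{x})=\{\sum_{n\in A}x_n: A\subseteq\{1,\dots,N\}\}$ and its cardinal function $f_{\mathbf{x}}:\mathcal{A}(\mathbf{x})\to\mathbb{N}$ sends $x$ to the number of subsets $A\subseteq\{1,\dots,N\}$ with $\sum_{n\in A}x_n=x$ (terms with equal values at different positions are distinguished). $\mathcal{F}$ is the family of ranges of cardinal functions of finite sequences of positive reals. *)

From Stdlib Require Import Reals List.
Import ListNotations.
Open Scope R_scope.

(* All subsets of {1,...,N}, encoded as bit-masks (lists of booleans of length N);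
   position i of the mask says whether index i+1 belongs to the subset. *)
Fixpoint masks (N : nat) : list (list bool) :=
  match N with
  | O => [[]]
  | S n => map (cons true) (masks n) ++ map (cons false) (masks n)
  end.

Fixpoint subset_sum (x : list R) (m : list bool) : R :=
  match x, m with
  | a :: x', b :: m' => (if b then a else 0) + subset_sum x' m'
  | _, _ => 0
  end.

Definition achievement_set (x : list R) (s : R) : Prop :=
  exists m, In m (masks (length x)) /\ subset_sum x m = s.

Definition cardinal_function (x : list R) (s : R) : nat :=
  length (filter (fun m => if Req_EM_T (subset_sum x m) s then true else false)
                 (masks (length x))).

Definition cardinal_range (x : list R) (k : nat) : Prop :=
  exists s, achievement_set x s /\ cardinal_function x s = k.

Definition positive_seq (x : list R) : Prop := Forall (fun a => 0 < a) x.

Definition in_family_F (M : nat -> Prop) : Prop :=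
  exists x, positive_seq x /\ forall k, M k <-> cardinal_range x k.

From Stdlib Require Import Reals List.
From Stdlib Require Import ZArith Lra Lia.
Import ListNotations.
Open Scope R_scope.

(* The cardinal function of x, hence its range, depends only on which pairs of subsets
   of indices have equal sums in x.  These ties form a finite homogeneous linear system
   with integer coefficients solved by x.  By Gaussian elimination the rational solutions
   of such a system are dense in its real solutions, so some rational y arbitrarily close
   to x satisfies every tie of x; close enough, y is positive and creates no new tie,
   since the subset sums of x that differ are separated by a positive gap.  Clearing
   denominators then turns y into positive integers with the same ties. *)

Fixpoint dot (c : list Z) (x : list R) : R :=
  match c, x with
  | a :: c', u :: x' => IZR a * u + dot c' x'
  | _, _ => 0
  end.

Fixpoint zadd (l1 l2 : list Z) : list Z :=
  match l1, l2 with
  | [], _ => l2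
  | _, [] => l1
  | u :: l1', v :: l2' => (u + v)%Z :: zadd l1' l2'
  end.

Fixpoint abssum (c : list Z) : R :=
  match c with [] => 0 | a :: c' => Rabs (IZR a) + abssum c' end.

Definition eliminate (p e : list Z) : list Z :=
  zadd (map (Z.mul (hd 0%Z p)) (tl e)) (map (Z.mul (- hd 0%Z e)) (tl p)).

Definition solves (eqs : list (list Z)) (x : list R) : Prop :=
  Forall (fun c => dot c x = 0) eqs.

Definition close (eps : R) (y x : list R) : Prop :=
  Forall2 (fun u v => Rabs (u - v) <= eps) y x.

Definition has_denominator (D : Z) (y : list R) : Prop :=
  Forall (fun u => exists z, u * IZR D = IZR z) y.

Lemma dot_nil_r c : dot c [] = 0.
Proof. destruct c; reflexivity. Qed.

Lemma dot_cons_r c u x : dot c (u :: x) = IZR (hd 0%Z c) * u + dot (tl c) x.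
Proof. destruct c; simpl; ring. Qed.

Lemma dot_zadd l1 l2 x : dot (zadd l1 l2) x = dot l1 x + dot l2 x.
Proof.
  revert l2 x; induction l1 as [|u l1 IH]; intros [|v l2] [|w x]; simpl; try ring.
  rewrite IH, plus_IZR; ring.
Qed.

Lemma dot_scale k c x : dot (map (Z.mul k) c) x = IZR k * dot c x.
Proof.
  revert x; induction c as [|u c IH]; intros [|w x]; simpl; try ring.
  rewrite IH, mult_IZR; ring.
Qed.

Lemma dot_eliminate p e x :
  dot (eliminate p e) x = IZR (hd 0%Z p) * dot (tl e) x - IZR (hd 0%Z e) * dot (tl p) x.
Proof. unfold eliminate; rewrite dot_zadd, !dot_scale, opp_IZR; ring. Qed.

Lemma solves_eliminate eqs p u x :
  In p eqs -> solves eqs (u :: x) -> solves (map (eliminate p) eqs) x.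
Proof.
  intros Hp Hsol; unfold solves in *; rewrite Forall_forall in Hsol.
  rewrite Forall_map, Forall_forall; intros e He.
  pose proof (Hsol p Hp) as Ep; pose proof (Hsol e He) as Ee.
  rewrite dot_cons_r in Ep, Ee; rewrite dot_eliminate.
  replace (dot (tl e) x) with (- IZR (hd 0%Z e) * u) by lra.
  replace (dot (tl p) x) with (- IZR (hd 0%Z p) * u) by lra; ring.
Qed.

Lemma solves_uneliminate eqs p u y :
  IZR (hd 0%Z p) <> 0 -> IZR (hd 0%Z p) * u + dot (tl p) y = 0 ->
  solves (map (eliminate p) eqs) y -> solves eqs (u :: y).
Proof.
  intros Ha Hu Hsol; unfold solves in *; rewrite Forall_map in Hsol.
  eapply Forall_impl; [|exact Hsol]; intros e He; cbv beta in He; rewrite dot_eliminate in He.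
  rewrite dot_cons_r; apply (Rmult_eq_reg_l (IZR (hd 0%Z p))); [|exact Ha].
  replace (dot (tl p) y) with (- IZR (hd 0%Z p) * u) in He by lra.
  lra.
Qed.

Lemma abssum_nonneg c : 0 <= abssum c.
Proof. induction c as [|a c IH]; simpl; [lra|]; pose proof (Rabs_pos (IZR a)); lra. Qed.

Lemma dot_close c d y x :
  0 <= d -> close d y x -> Rabs (dot c y - dot c x) <= abssum c * d.
Proof.
  intros Hd Hc; revert c; induction Hc as [|u v y x Huv Hc IH]; intros [|a c]; cbn [dot];
    try (rewrite Rminus_diag, Rabs_R0; apply Rmult_le_pos; [apply abssum_nonneg|exact Hd]).
  replace (IZR a * u + dot c y - (IZR a * v + dot c x))
    with (IZR a * (u - v) + (dot c y - dot c x)) by ring.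
  eapply Rle_trans; [apply Rabs_triang|]; rewrite Rabs_mult; cbn [abssum].
  pose proof (IH c); pose proof (Rabs_pos (IZR a)); pose proof (Rabs_pos (u - v)); nra.
Qed.

Lemma close_weaken d e y x : d <= e -> close d y x -> close e y x.
Proof. intros Hde; apply Forall2_impl; intros; lra. Qed.

Lemma has_denominator_mul D K y : has_denominator D y -> has_denominator (D * K) y.
Proof.
  apply Forall_impl; intros u [z Hz]; exists (z * K)%Z.
  rewrite !mult_IZR, <- Hz; ring.
Qed.

Lemma dot_has_denominator D c y :
  has_denominator D y -> exists z, dot c y * IZR D = IZR z.
Proof.
  intros Hy; revert c; induction Hy as [|u y [z Hz] Hy IH]; intros [|a c]; simpl;
    try (exists 0%Z; ring).
  destruct (IH c) as [w Hw]; exists (a * z + w)%Z.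
  rewrite plus_IZR, mult_IZR, <- Hz, <- Hw; ring.
Qed.

Lemma rational_approx x eps :
  0 < eps -> exists z K, (0 < K)%Z /\ Rabs (IZR z / IZR K - x) <= eps.
Proof.
  intros He; destruct (archimed (/ eps)) as [HK _].
  pose proof (Rinv_0_lt_compat _ He).
  set (K := up (/ eps)) in *.
  assert (HKR : 0 < IZR K) by lra.
  destruct (archimed (x * IZR K)) as [Hz1 Hz2].
  exists (up (x * IZR K)), K; split; [apply lt_0_IZR; lra|].
  replace (IZR (up (x * IZR K)) / IZR K - x)
    with ((IZR (up (x * IZR K)) - x * IZR K) / IZR K) by (field; lra).
  assert (Heps : 1 <= eps * IZR K).
  { replace 1 with (eps * / eps) by (field; lra); apply Rmult_le_compat_l; lra. }
  rewrite Rabs_right.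
  - apply (Rmult_le_reg_r (IZR K)); [lra|]; unfold Rdiv.
    rewrite Rmult_assoc, Rinv_l by lra; lra.
  - apply Rle_ge; unfold Rdiv; apply Rmult_le_pos; [lra|left; apply Rinv_0_lt_compat; lra].
Qed.

Definition approximable (eqs : list (list Z)) (x : list R) : Prop :=
  forall eps, 0 < eps -> exists y D,
    (0 < D)%Z /\ close eps y x /\ has_denominator D y /\ solves eqs y.

Lemma approximable_pivot eqs p x1 x :
  In p eqs -> hd 0%Z p <> 0%Z -> solves eqs (x1 :: x) ->
  approximable (map (eliminate p) eqs) x -> approximable eqs (x1 :: x).
Proof.
  intros Hp Ha Hsol IH eps He.
  set (a := hd 0%Z p) in *; set (c := tl p).
  assert (HaR : IZR a <> 0) by (apply not_0_IZR; exact Ha).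
  assert (Ha1 : 1 <= Rabs (IZR a)) by (rewrite <- abs_IZR; apply IZR_le; lia).
  pose proof (abssum_nonneg c).
  set (eps' := eps / (1 + abssum c)).
  assert (He' : 0 < eps') by (apply Rdiv_lt_0_compat; lra).
  assert (Hee : eps' * (1 + abssum c) = eps) by (unfold eps'; field; lra).
  destruct (IH eps' He') as (y & D & HD & Hc & Hden & Hy).
  set (y1 := - dot c y / IZR a).
  assert (Hy1 : IZR a * y1 + dot c y = 0) by (unfold y1; field; exact HaR).
  assert (Hx1 : IZR a * x1 + dot c x = 0).
  { unfold solves in Hsol; rewrite Forall_forall in Hsol.
    pose proof (Hsol p Hp) as E; rewrite dot_cons_r in E; exact E. }
  exists (y1 :: y), (D * (a * a))%Z; split; [|split; [|split]].
  - apply Z.mul_pos_pos; [exact HD|]; destruct (Z.lt_total a 0) as [|[|]]; nia.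
  - constructor; [|apply (close_weaken eps'); [nra|exact Hc]].
    pose proof (dot_close c eps' y x (Rlt_le _ _ He') Hc) as Hdot.
    assert (Hdiff : (y1 - x1) * IZR a = - (dot c y - dot c x)) by lra.
    apply (Rmult_le_reg_r (Rabs (IZR a))); [lra|].
    rewrite <- Rabs_mult, Hdiff, Rabs_Ropp.
    pose proof (Rabs_pos (dot c y - dot c x)); nra.
  - constructor; [|apply has_denominator_mul, Hden].
    destruct (dot_has_denominator D c y Hden) as [z Hz].
    exists (- (z * a))%Z; rewrite opp_IZR, !mult_IZR, <- Hz.
    unfold y1; field; exact HaR.
  - exact (solves_uneliminate eqs p y1 y HaR Hy1 Hy).
Qed.

Lemma approximable_free eqs x1 x :
  Forall (fun e => hd 0%Z e = 0%Z) eqs ->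
  approximable (map (@tl Z) eqs) x -> approximable eqs (x1 :: x).
Proof.
  intros H0 IH eps He.
  destruct (IH eps He) as (y & D & HD & Hc & Hden & Hy).
  destruct (rational_approx x1 eps He) as (z & K & HK & Hz).
  exists (IZR z / IZR K :: y), (D * K)%Z; split; [nia|split; [|split]].
  - constructor; assumption.
  - constructor; [|apply has_denominator_mul, Hden].
    exists (z * D)%Z; rewrite !mult_IZR; field; apply not_0_IZR; lia.
  - unfold solves in *; rewrite Forall_map in Hy; rewrite Forall_forall in *.
    intros e He'; rewrite dot_cons_r, H0, Hy by assumption; ring.
Qed.

Lemma solves_approximable x : forall eqs, solves eqs x -> approximable eqs x.
Proof.
  induction x as [|x1 x IH]; intros eqs Hsol.
  - intros eps He; exists [], 1%Z; split; [lia|split; [constructor|split; [constructor|]]].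
    unfold solves in *; eapply Forall_impl; [|exact Hsol]; intros c _; apply dot_nil_r.
  - destruct (find (fun e => negb (Z.eqb (hd 0%Z e) 0)) eqs) as [p|] eqn:Hf.
    + apply find_some in Hf as [Hp Ha]; apply Bool.negb_true_iff, Z.eqb_neq in Ha.
      exact (approximable_pivot eqs p x1 x Hp Ha Hsol
               (IH _ (solves_eliminate eqs p x1 x Hp Hsol))).
    + assert (H0 : Forall (fun e => hd 0%Z e = 0%Z) eqs).
      { apply Forall_forall; intros e He; pose proof (find_none _ _ Hf e He) as Hn.
        now apply Bool.negb_false_iff, Z.eqb_eq in Hn. }
      apply approximable_free; [exact H0|]; apply IH.
      unfold solves in *; rewrite Forall_map; rewrite Forall_forall in *.
      intros e He; rewrite <- (Hsol e He), dot_cons_r, H0 by assumption; ring.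
Qed.

Lemma length_in_masks n m : In m (masks n) -> length m = n.
Proof.
  revert m; induction n as [|n IH]; simpl; intros m Hm.
  - destruct Hm as [<-|[]]; reflexivity.
  - apply in_app_or in Hm as [Hm|Hm]; apply in_map_iff in Hm as [m' [<- Hm]];
      simpl; f_equal; auto.
Qed.

Fixpoint mask_diff (m m' : list bool) : list Z :=
  match m, m' with
  | b :: m1, b' :: m1' => (Z.b2z b - Z.b2z b')%Z :: mask_diff m1 m1'
  | _, _ => []
  end.

Lemma dot_mask_diff x m m' : length m = length x -> length m' = length x ->
  dot (mask_diff m m') x = subset_sum x m - subset_sum x m'.
Proof.
  revert m m'; induction x as [|u x IH]; intros [|b m] [|b' m'] H1 H2;
    simpl in *; try lia; try ring.
  rewrite IH by lia; rewrite minus_IZR; destruct b, b'; simpl; ring.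
Qed.

Lemma subset_sum_close d y x m : 0 <= d -> close d y x ->
  Rabs (subset_sum y m - subset_sum x m) <= INR (length x) * d.
Proof.
  intros Hd Hc; revert m; induction Hc as [|u v y x Huv Hc IH]; intros [|b m];
    cbn [subset_sum length];
    try (rewrite Rminus_diag, Rabs_R0; apply Rmult_le_pos; [apply pos_INR|exact Hd]).
  replace ((if b then u else 0) + subset_sum y m - ((if b then v else 0) + subset_sum x m))
    with (((if b then u else 0) - (if b then v else 0)) + (subset_sum y m - subset_sum x m))
    by ring.
  eapply Rle_trans; [apply Rabs_triang|]; rewrite S_INR; specialize (IH m).
  destruct b; [|rewrite Rminus_diag, Rabs_R0]; lra.
Qed.

Lemma subset_sum_scale c y m :
  subset_sum (map (fun u => u * c) y) m = subset_sum y m * c.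
Proof.
  revert m; induction y as [|u y IH]; intros [|b m]; simpl; try ring.
  rewrite IH; destruct b; ring.
Qed.

Definition same_ties (x w : list R) : Prop :=
  forall m m', In m (masks (length x)) -> In m' (masks (length x)) ->
    (subset_sum x m = subset_sum x m' <-> subset_sum w m = subset_sum w m').

Lemma same_ties_sym x w : length x = length w -> same_ties x w -> same_ties w x.
Proof.
  unfold same_ties; intros Hl H m m'; rewrite <- Hl; intros Hm Hm'.
  symmetry; auto.
Qed.

Lemma same_ties_scale y c : c <> 0 -> same_ties y (map (fun u => u * c) y).
Proof.
  intros Hc m m' _ _; rewrite !subset_sum_scale.
  split; intros H; [rewrite H; reflexivity|exact (Rmult_eq_reg_r c _ _ H Hc)].
Qed.

Lemma cardinal_range_same_ties x w k : length x = length w -> same_ties x w ->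
  cardinal_range x k -> cardinal_range w k.
Proof.
  intros Hl Hties [s [[m [Hm <-]] Hk]].
  exists (subset_sum w m); split; [exists m; rewrite <- Hl; auto|].
  rewrite <- Hk; unfold cardinal_function; rewrite <- Hl; f_equal.
  apply filter_ext_in; intros m' Hm'; specialize (Hties m' m Hm' Hm).
  destruct (Req_EM_T (subset_sum x m') (subset_sum x m));
    destruct (Req_EM_T (subset_sum w m') (subset_sum w m)); tauto.
Qed.

Lemma cardinal_range_iff x w k : length x = length w -> same_ties x w ->
  cardinal_range x k <-> cardinal_range w k.
Proof.
  intros Hl Hties; split; apply cardinal_range_same_ties; auto.
  apply same_ties_sym; assumption.
Qed.

Definition mask_pairs (x : list R) : list (list bool * list bool) :=
  list_prod (masks (length x)) (masks (length x)).

Definition is_tie (x : list R) (p : list bool * list bool) : bool :=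
  if Req_EM_T (subset_sum x (fst p)) (subset_sum x (snd p)) then true else false.

Definition tie_equations (x : list R) : list (list Z) :=
  map (fun p => mask_diff (fst p) (snd p)) (filter (is_tie x) (mask_pairs x)).

Definition sum_gaps (x : list R) : list R :=
  map (fun p => Rabs (subset_sum x (fst p) - subset_sum x (snd p)))
      (filter (fun p => negb (is_tie x p)) (mask_pairs x)).

Lemma solves_tie_equations x : solves (tie_equations x) x.
Proof.
  unfold solves, tie_equations; rewrite Forall_map, Forall_forall.
  intros [m m'] Hp; apply filter_In in Hp as [Hp Htie].
  apply in_prod_iff in Hp as [H1 H2]; unfold is_tie in Htie; simpl in *.
  rewrite dot_mask_diff by (apply length_in_masks; assumption).
  destruct (Req_EM_T _ _); [lra|discriminate].
Qed.

Lemma sum_gaps_pos x : Forall (fun r => 0 < r) (sum_gaps x).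
Proof.
  unfold sum_gaps; rewrite Forall_map, Forall_forall; intros [m m'] Hp.
  apply filter_In in Hp as [_ Hne]; unfold is_tie in Hne; simpl in *.
  destruct (Req_EM_T _ _); [discriminate|]; apply Rabs_pos_lt; lra.
Qed.

Lemma exists_pos_lower_bound l :
  Forall (fun r => 0 < r) l -> exists g, 0 < g /\ Forall (fun r => g <= r) l.
Proof.
  induction 1 as [|r l Hr _ [g [Hg Hl]]]; [exists 1; split; [lra|constructor]|].
  exists (Rmin r g); split; [apply Rmin_pos; assumption|constructor; [apply Rmin_l|]].
  eapply Forall_impl; [|exact Hl]; intros a Ha; pose proof (Rmin_r r g); lra.
Qed.

Lemma close_positive d g y x :
  close d y x -> Forall (fun r => g <= r) x -> d < g -> positive_seq y.
Proof.
  induction 1 as [|u v y x Huv _ IH]; intros Hx Hd; constructor; inversion Hx; subst.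
  - pose proof (Rle_abs (v - u)); rewrite Rabs_minus_sym in Huv; lra.
  - apply IH; assumption.
Qed.

(* A perturbation of size [d] moves every subset sum by at most [N d], so ties of [x] are
   kept by the equations and non-ties by the gap [g > 2 N d]. *)
Lemma same_ties_of_close x y d g :
  0 <= d -> close d y x -> 2 * INR (length x) * d < g ->
  Forall (fun r => g <= r) (sum_gaps x) -> solves (tie_equations x) y ->
  same_ties x y.
Proof.
  intros Hd Hc Hgap Hgaps Hy m m' Hm Hm'.
  assert (Hpair : In (m, m') (mask_pairs x)) by (apply in_prod; assumption).
  assert (Hly : length y = length x) by exact (Forall2_length Hc).
  destruct (Req_EM_T (subset_sum x m) (subset_sum x m')) as [Heq|Hne].
  - split; intros _; [|exact Heq].
    assert (Hin : In (mask_diff m m') (tie_equations x)).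
    { apply in_map_iff; exists (m, m'); split; [reflexivity|].
      apply filter_In; split; [exact Hpair|]; unfold is_tie; simpl.
      destruct (Req_EM_T _ _); [reflexivity|contradiction]. }
    unfold solves in Hy; rewrite Forall_forall in Hy; specialize (Hy _ Hin).
    rewrite dot_mask_diff in Hy by (rewrite Hly; apply length_in_masks; assumption); lra.
  - split; intros Hyeq; [contradiction|exfalso].
    assert (Hin : In (m, m') (filter (fun p => negb (is_tie x p)) (mask_pairs x))).
    { apply filter_In; split; [exact Hpair|]; unfold is_tie; simpl.
      destruct (Req_EM_T _ _); [contradiction|reflexivity]. }
    unfold sum_gaps in Hgaps; rewrite Forall_map, Forall_forall in Hgaps.
    specialize (Hgaps _ Hin); simpl in Hgaps.
    pose proof (subset_sum_close d y x m Hd Hc) as C1.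
    pose proof (subset_sum_close d y x m' Hd Hc) as C2.
    rewrite Hyeq in C1.
    pose proof (Rabs_triang (subset_sum x m - subset_sum y m')
                            (subset_sum y m' - subset_sum x m')) as T.
    replace (subset_sum x m - subset_sum y m' + (subset_sum y m' - subset_sum x m'))
      with (subset_sum x m - subset_sum x m') in T by ring.
    rewrite Rabs_minus_sym in C1; lra.
Qed.

Lemma exists_rational_same_ties x : positive_seq x ->
  exists y D, (0 < D)%Z /\ has_denominator D y /\ positive_seq y /\
    length y = length x /\ same_ties x y.
Proof.
  intros Hpos.
  destruct (exists_pos_lower_bound (x ++ sum_gaps x)) as [g [Hg Hlow]].
  { apply Forall_app; split; [exact Hpos|apply sum_gaps_pos]. }
  apply Forall_app in Hlow as [Hlowx Hlowgaps].
  pose proof (pos_INR (length x)) as HN.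
  set (d := g / (2 * INR (length x) + 2)).
  assert (Hd : 0 < d) by (apply Rdiv_lt_0_compat; lra).
  assert (Hdg : d * (2 * INR (length x) + 2) = g) by (unfold d; field; lra).
  destruct (solves_approximable x _ (solves_tie_equations x) d Hd)
    as (y & D & HD & Hc & Hden & Hy).
  exists y, D; split; [exact HD|split; [exact Hden|split; [|split]]].
  - apply (close_positive d g y x Hc Hlowx); nra.
  - exact (Forall2_length Hc).
  - apply (same_ties_of_close x y d g); [lra|exact Hc|nra|exact Hlowgaps|exact Hy].
Qed.

Lemma nat_multiple D y : (0 < D)%Z -> positive_seq y -> has_denominator D y ->
  exists ns, Forall (fun n => (0 < n)%nat) ns /\ map INR ns = map (fun u => u * IZR D) y.
Proof.
  intros HD; assert (HDR : 0 < IZR D) by (apply IZR_lt; exact HD).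
  induction 1 as [|u y Hu _ IH]; intros Hden; [exists []; split; constructor|].
  inversion Hden as [|? ? [z Hz] Hden']; subst.
  destruct (IH Hden') as [ns [Hns Hmap]].
  assert (Hzpos : (0 < z)%Z) by (apply lt_0_IZR; rewrite <- Hz; nra).
  exists (Z.to_nat z :: ns); split; [constructor; [lia|exact Hns]|].
  simpl; rewrite Hmap, Hz, INR_IZR_INZ, Z2Nat.id by lia; reflexivity.
Qed.

Theorem theorem8p1 (M : nat -> Prop) :
  in_family_F M ->
  exists ns : list nat,
    Forall (fun n => (0 < n)%nat) ns /\
    forall k, M k <-> cardinal_range (map INR ns) k.
Proof.
  intros [x [Hpos HM]].
  destruct (exists_rational_same_ties x Hpos) as (y & D & HD & Hden & Hy & Hlen & Hties).
  destruct (nat_multiple D y HD Hy Hden) as (ns & Hns & Hmap).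
  exists ns; split; [exact Hns|]; intros k.
  rewrite HM, Hmap, (cardinal_range_iff x y k) by auto.
  apply cardinal_range_iff; [now rewrite length_map|].
  apply same_ties_scale, not_0_IZR; lia.
Qed.
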